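(* Let $l\in\mathbb N-\frac12$ and let $V$ be a simple weight $(\mathbb Ch+\tilde{\mathcal H}^{(l)})$-module on which $z$ acts as a nonzero scalar $\dot z$, such that $\mathrm{supp}(V)\subseteq\lambda+\mathbb Z$ for some $\lambda\in\mathbb C$ with $\dim V_\lambda<\infty$. (i) If $l=\frac12$, then $V$ is a highest weight module, or a lowest weight module, or $V$ is isomorphic to $D(a,\dot z)$ for some $a\in\mathbb C\setminus\mathbb Z$, where $h$ acts on $D(a,\dot z)$ by $hx^i=(\mu-i)x^i$ for some $\mu\in\mathbb C$. (ii) If $l\in\mathbb N+\frac12$ (i.e. $l\ge\frac32$), then $V$ is a highest weight module or a lowest weight module.
   Context: For $l\in\mathbb N-\frac12$, $\tilde{\mathcal H}^{(l)}$ has basis $p_0,\dots,p_{2l},z$ with $z$ central and $[p_k,p_{k'}]=\delta_{k+k',2l}(-1)^{k+l+\frac12}k!(2l-k)!\,z$; the Lie algebra $\mathbb Ch+\tilde{\mathcal H}^{(l)}$ has additionally $[h,p_k]=2(l-k)p_k$, $[h,z]=0$. A weight module is one on which $h$ acts diagonalizably; $V_\lambda=\{v:hv=\lambda v\}$, $\mathrm{supp}(V)=\{\lambda:V_\lambda\ne0\}$. A highest (resp. lowest) weight module is one generated by a weight vector annihilated by all $p_k$ with $k<l$ (resp. $k>l$). For $\dot z\ne0$ and $a\in\mathbb C$, $D(a,\dot z)$ is the $\tilde{\mathcal H}^{(1/2)}$-module $\mathbb C[x,x^{-1}]$ with $p_1x^i=x^{i+1}$, $p_0x^i=-\dot z(a+i)x^{i-1}$,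 $zx^i=\dot zx^i$ ($i\in\mathbb Z$). *)

From HB Require Import structures.
From mathcomp Require Import all_boot all_order all_algebra.
Set Implicit Arguments. Unset Strict Implicit. Unset Printing Implicit Defensive.
Import Order.TTheory GRing.Theory Num.Theory.
Local Open Scope ring_scope.

(* Throughout, l = n + 1/2 with n : nat, so 2l = 2n+1 = n.*2.+1,
   the basis of the Heisenberg part is p_0, ..., p_(2n+1), z, and h is the
   extra grading element. *)

Section Heisenberg.
Variables (C : numClosedFieldType) (V : lmodType C) (n : nat).
Variables (h z : {linear V -> V}) (p : nat -> {linear V -> V}).

(* The operators define a representation of  C h + H~^(l),  l = n + 1/2:
   [p_k,p_k'] = delta_{k+k',2l} (-1)^(k+l+1/2) k! (2l-k)! z,
   [h,p_k] = 2(l-k) p_k, [h,z] = 0, z central. *)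
Definition is_rep : Prop :=
  [/\ (forall k k', (k <= n.*2.+1)%N -> (k' <= n.*2.+1)%N -> forall v,
        p k (p k' v) - p k' (p k v) =
        (if (k + k' == n.*2.+1)%N
         then (-1) ^+ (k + n + 1) * ((k`! * (n.*2.+1 - k)`!)%N)%:R
         else 0) *: z v),
      (forall k, (k <= n.*2.+1)%N -> forall v,
        h (p k v) - p k (h v) = ((n.*2.+1)%:R - (k.*2)%:R) *: p k v),
      (forall k, (k <= n.*2.+1)%N -> forall v, z (p k v) - p k (z v) = 0)
    & (forall v, h (z v) - z (h v) = 0)].

Definition submodule (P : V -> Prop) : Prop :=
  [/\ P 0, (forall u v, P u -> P v -> P (u + v)),
      (forall (a : C) v, P v -> P (a *: v))
    & [/\ (forall v, P v -> P (h v)), (forall v, P v -> P (z v))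
    & (forall k, (k <= n.*2.+1)%N -> forall v, P v -> P (p k v))]].

Definition simple_module : Prop :=
  (exists v : V, v != 0) /\
  forall P, submodule P -> (forall v, P v -> v = 0) \/ (forall v, P v).

Definition weight_module : Prop :=
  forall v : V, exists s : seq (C * V),
    (forall x, x \in s -> h x.2 = x.1 *: x.2) /\ v = \sum_(x <- s) x.2.

Definition weight_space (mu : C) (v : V) : Prop := h v = mu *: v.

Definition in_supp (mu : C) : Prop := exists v : V, v != 0 /\ weight_space mu v.

Definition fin_dim (P : V -> Prop) : Prop :=
  exists s : seq V, forall v, P v ->
    exists c : 'I_(size s) -> C, v = \sum_(i < size s) c i *: s`_i.

Definition generated_by (v : V) : Prop :=
  forall P, submodule P -> P v -> forall w, P w.

(* highest weight module: generated by a weight vector killed by p_k, k < l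
   (i.e. k <= n) *)
Definition highest_weight_module : Prop :=
  exists (v : V) (mu : C), [/\ weight_space mu v,
    (forall k, (k <= n)%N -> p k v = 0) & generated_by v].

(* lowest weight module: generated by a weight vector killed by p_k, k > l
   (i.e. n < k <= 2n+1) *)
Definition lowest_weight_module : Prop :=
  exists (v : V) (mu : C), [/\ weight_space mu v,
    (forall k, (n < k <= n.*2.+1)%N -> p k v = 0) & generated_by v].

Definition is_basis_Z (e : int -> V) : Prop :=
  (forall (s : seq int) (c : int -> C), uniq s ->
     \sum_(i <- s) c i *: e i = 0 -> forall i, i \in s -> c i = 0) /\
  (forall v : V, exists (s : seq int) (c : int -> C), v = \sum_(i <- s) c i *: e i).

(* V is isomorphic to D(a, zd) with h x^i = (mu - i) x^i: there is a basis
   (e_i)_{i in Z} of V (the image of x^i) on which the operators act as on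
   the Laurent polynomial module D(a, zd). *)
Definition iso_D (a zd mu : C) : Prop :=
  exists e : int -> V, is_basis_Z e /\
    forall i : int,
      [/\ p 1 (e i) = e (i + 1),
          p 0 (e i) = (- (zd * (a + i%:~R))) *: e (i - 1),
          z (e i) = zd *: e i
        & h (e i) = (mu - i%:~R) *: e i].

End Heisenberg.

(* Write N = 2l.  Since [p_k, p_(N-k)] is a nonzero scalar, the vectors killed
   by some power of p_k form a submodule; so in a simple module every p_k is
   injective or locally nilpotent, and if p_k is locally nilpotent then
   p_(N-k) is injective.  If all raising operators p_k (k < l) are locally
   nilpotent, a common kernel vector makes V a highest weight module, and
   symmetrically for lowest weight.  Otherwise a raising p_j and a lowering
   p_(N-i) are injective; shifting weights then gives V_lam != 0.  If j != i,
   iterating a weight-zero injective word in these operators on an eigenvector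
   of p_j p_(N-j) in V_lam produces infinitely many eigenvectors with distinct
   eigenvalues in the finite-dimensional V_lam, which is impossible.  For
   l > 1/2 the case j = i reduces to the previous one through a third index.
   For l = 1/2 (so j = i = 0), an eigenvector w of p_0 p_1 in V_lam yields the
   vectors p_1^k w and normalized p_0^k w, which form a basis of V on which
   the operators act as on D(a, zd). *)

From HB Require Import structures.
From mathcomp Require Import all_boot all_order all_algebra.
From mathcomp Require Import ring zify.
From Stdlib Require Import Classical.
Import Order.TTheory GRing.Theory Num.Theory.
Local Open Scope ring_scope.

Set Implicit Arguments. Unset Strict Implicit. Unset Printing Implicit Defensive.

Section Iterates.
Variables (R : pzRingType) (V : lmodType R).
Implicit Types (f : {linear V -> V}) (u v : V).

Definition kernel_free (f : V -> V) : Prop := forall v, f v = 0 -> v = 0.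

Definition locally_nilpotent (f : V -> V) : Prop := forall v, exists m, iter m f v = 0.

Lemma iter_lin0 f m : iter m f 0 = 0.
Proof. by elim: m => //= m ->; rewrite linear0. Qed.

Lemma iter_linD f m u v : iter m f (u + v) = iter m f u + iter m f v.
Proof. by elim: m => //= m ->; rewrite linearD. Qed.

Lemma iter_linZ f m (a : R) v : iter m f (a *: v) = a *: iter m f v.
Proof. by elim: m => //= m ->; rewrite linearZ. Qed.

Lemma iter_comm (T : Type) (f g : T -> T) m x :
  (forall y, f (g y) = g (f y)) -> f (iter m g x) = iter m g (f x).
Proof. by move=> fg; elim: m => //= m IH; rewrite fg IH. Qed.

Lemma iter_inj f m v : kernel_free f -> iter m f v = 0 -> v = 0.
Proof. by move=> fi; elim: m => //= m IH /fi. Qed.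

Lemma last_nonzero_iterate f x m : x != 0 -> iter m f x = 0 ->
  exists k, iter k f x != 0 /\ f (iter k f x) = 0.
Proof.
move=> x0; elim: m => [|m IH] /=; first by move=> e; rewrite e eqxx in x0.
by case: (eqVneq (iter m f x) 0) => [e _|ne e]; [exact: IH | exists m].
Qed.

Lemma iter_shift (H : V -> V) f (d : R) m v :
  (forall v, H (f v) - f (H v) = d *: f v) ->
  H (iter m f v) = iter m f (H v) + (m%:R * d) *: iter m f v.
Proof.
move=> Hf; elim: m => [|m IH] /=; first by rewrite mul0r scale0r addr0.
move/eqP: (Hf (iter m f v)); rewrite subr_eq => /eqP ->.
rewrite IH linearD linearZ /= addrCA -scalerDl; congr (_ + _ *: _).
by rewrite mulrSr mulrDl mul1r addrC.
Qed.

Lemma iter_eigen (H : V -> V) f (d mu : R) m v :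
  (forall v, H (f v) - f (H v) = d *: f v) -> H v = mu *: v ->
  H (iter m f v) = (mu + m%:R * d) *: iter m f v.
Proof. by move=> Hf Hv; rewrite (iter_shift _ _ Hf) Hv iter_linZ -scalerDl. Qed.

Lemma iter_heisenberg f (B : V -> V) (c : R) m v :
  (forall v, f (B v) - B (f v) = c *: v) ->
  iter m.+1 f (B v) = B (iter m.+1 f v) + (m.+1%:R * c) *: iter m f v.
Proof.
move=> AB; elim: m => [|m IH]; first by rewrite /= mul1r -(AB v) addrC subrK.
rewrite (iterS m.+1) IH linearD linearZ /=.
move/eqP: (AB (iter m.+1 f v)); rewrite subr_eq => /eqP ->.
rewrite /= addrAC addrC -scalerDl; congr (_ + _ *: _).
by rewrite [m.+2%:R]mulrSr mulrDl mul1r addrC.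
Qed.

Lemma comp_commutator f (B : V -> V) (c : R) :
  (forall v, f (B v) - B (f v) = c *: v) ->
  forall v, f (B (f v)) - f (f (B v)) = - c *: f v.
Proof. by move=> AB v; rewrite -linearB -opprB AB linearN linearZ scaleNr. Qed.

End Iterates.

Section FieldLinearAlgebra.
Variables (F : fieldType) (V : lmodType F).

Lemma eigen_sum_eq0 (X : eqType) (E : {linear V -> V}) (s : seq X) (u : X -> V)
    (ev : X -> F) :
  uniq s -> {in s &, injective ev} -> (forall x, x \in s -> E (u x) = ev x *: u x) ->
  \sum_(x <- s) u x = 0 -> forall x, x \in s -> u x = 0.
Proof.
elim: s u => [|y s IH] u //= /andP[ys us] inj eig; rewrite big_cons => S0.
have in_s x : x \in s -> x \in y :: s by rewrite in_cons orbC => ->.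
(* applying E - ev y kills the y-term and rescales the others *)
have S1 : \sum_(x <- s) (ev x - ev y) *: u x = 0.
  have := congr1 (fun w => E w - ev y *: w) S0.
  rewrite /= linear0 scaler0 subr0 linearD linear_sum eig ?mem_head //.
  rewrite scalerDr opprD addrACA subrr add0r => ES.
  rewrite -[RHS]ES scaler_sumr -sumrB; apply: eq_big_seq => x xs.
  by rewrite eig ?in_s // scalerBl.
have u0 x : x \in s -> u x = 0.
  move=> xs; have /eqP : (ev x - ev y) *: u x = 0.
    apply: (IH (fun x => (ev x - ev y) *: u x) us _ _ S1 x xs).
    - by move=> a b ha hb; apply: inj; rewrite in_s.
    - by move=> a ha; rewrite linearZ /= eig ?in_s // !scalerA mulrC.
  rewrite scaler_eq0 subr_eq0 => /orP[/eqP e|/eqP //].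
  by move: ys; rewrite -(inj x y (in_s _ xs) (mem_head _ _) e) xs.
move=> x; rewrite in_cons => /orP[/eqP ->|]; last exact: u0.
by move: S0; rewrite big1_seq ?addr0 // => a /andP[_ /u0].
Qed.

Lemma spanned_dependent (P : V -> Prop) (sp : seq V) :
  (forall v, P v -> exists c : 'I_(size sp) -> F, v = \sum_(i < size sp) c i *: sp`_i) ->
  forall f : 'I_(size sp).+1 -> V, (forall i, P (f i)) ->
  exists a : 'I_(size sp).+1 -> F, (exists i, a i != 0) /\ \sum_i a i *: f i = 0.
Proof.
move=> Hsp f Pf; have [c Hc] := fin_all_exists (fun i => Hsp _ (Pf i)).
pose M := \matrix_(i < (size sp).+1, j < size sp) c i j.
(* a nonzero row of the left kernel of the coordinate matrix gives the relation *)
have : kermx M != 0.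
  rewrite kermx_eq0 /row_free; apply: contraTneq (rank_leq_col M) => ->.
  by rewrite ltnn.
case/matrix0Pn => i [j kij]; exists (fun k => kermx M i k); split; first by exists j.
under eq_bigr => k _ do rewrite Hc scaler_sumr.
rewrite exchange_big /= big1 // => l _.
under eq_bigr => k _ do rewrite scalerA.
have : (kermx M *m M) i l = 0 by rewrite mulmx_ker mxE.
rewrite mxE -scaler_suml => E.
suff -> : \sum_k kermx M i k * c k l = 0 by rewrite scale0r.
by rewrite -[RHS]E; apply: eq_bigr => k _; rewrite [M _ _]mxE.
Qed.

Lemma no_infinite_eigen_family (E : {linear V -> V}) (P : V -> Prop) (sp : seq V)
    (g : nat -> V) (ev : nat -> F) :
  (forall v, P v -> exists c : 'I_(size sp) -> F, v = \sum_(i < size sp) c i *: sp`_i) ->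
  injective ev -> (forall i, P (g i)) -> (forall i, g i != 0) ->
  (forall i, E (g i) = ev i *: g i) -> False.
Proof.
move=> Hsp evI Pg g0 Eg.
have [al [[i0 al0] Sal]] := spanned_dependent Hsp (f := fun i => g i) (fun i => Pg i).
have /eqP : al i0 *: g i0 = 0.
  apply: (eigen_sum_eq0 (E := E) (ev := fun i : 'I_(size sp).+1 => ev i) (index_enum_uniq _)
    _ _ Sal (mem_index_enum i0)).
  - by move=> a b _ _ /evI/val_inj.
  - by move=> i _; rewrite linearZ /= Eg !scalerA mulrC.
by rewrite scaler_eq0 (negbTE al0) (negbTE (g0 _)).
Qed.

Lemma combination_uniq (I : eqType) (e : I -> V) (l : seq (F * I)) :
  exists (s : seq I) (c : I -> F), uniq s /\
    \sum_(x <- l) x.1 *: e x.2 = \sum_(i <- s) c i *: e i.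
Proof.
elim: l => [|[al i] l [s [c [us IH]]]]; first by exists [::], (fun _ => 0); rewrite !big_nil.
rewrite big_cons IH /=; case: (boolP (i \in s)) => iin.
  exists s, (fun j => if j == i then c i + al else c j); split => //.
  rewrite (bigD1_seq i) //= (bigD1_seq i iin us) /= eqxx addrA addrC -scalerDl.
  by rewrite addrC [al + _]addrC; congr (_ + _); apply: eq_bigr => j /negbTE ->.
exists (i :: s), (fun j => if j == i then al else c j); split; first by rewrite /= iin.
rewrite big_cons eqxx; congr (_ + _); apply: eq_big_seq => j js.
by case: eqP js => // ->; rewrite (negbTE iin).
Qed.

End FieldLinearAlgebra.

Section EigenvectorExistence.
Variables (F : closedFieldType) (V : lmodType F) (E : {linear V -> V}).
Implicit Types (q : {poly F}) (u v : V).

Definition poly_act q v : V := \sum_(i < size q) q`_i *: iter i E v.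

Lemma poly_actE q v B : (size q <= B)%N -> poly_act q v = \sum_(i < B) q`_i *: iter i E v.
Proof.
move=> sB; rewrite /poly_act (big_ord_widen B (fun i => q`_i *: iter i E v) sB) big_mkcond.
apply: eq_bigr => i _; case: ifP => // /negbT; rewrite -leqNgt => le.
by rewrite nth_default ?scale0r.
Qed.

Lemma poly_actD q q' v : poly_act (q + q') v = poly_act q v + poly_act q' v.
Proof.
pose B := maxn (size q) (size q').
rewrite !(poly_actE _ (B := B)) ?leq_maxl ?leq_maxr ?(leq_trans (size_polyD _ _)) //.
by rewrite -big_split; apply: eq_bigr => i _; rewrite coefD scalerDl.
Qed.

Lemma poly_actZ (c : F) q v : poly_act (c *: q) v = c *: poly_act q v.
Proof.
rewrite !(poly_actE _ (B := size q)) ?size_scale_leq // scaler_sumr.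
by apply: eq_bigr => i _; rewrite coefZ scalerA.
Qed.

Lemma poly_actX q v : poly_act (q * 'X) v = E (poly_act q v).
Proof.
rewrite (poly_actE _ (B := (size q).+1)); last first.
  by rewrite (leq_trans (size_polyMleq _ _)) // size_polyX addn2.
rewrite big_ord_recl coefMX eqxx scale0r add0r /poly_act linear_sum.
by apply: eq_bigr => i _; rewrite coefMX /= linearZ.
Qed.

Lemma poly_act_factor q (r : F) v :
  poly_act (q * ('X - r%:P)) v = E (poly_act q v) - r *: poly_act q v.
Proof. by rewrite mulrBr poly_actD poly_actX mulrC mul_polyC -scaleNr poly_actZ scaleNr. Qed.

(* If a nonzero polynomial in E kills u != 0, then some q(E) u is an
   eigenvector of E: split off linear factors of the polynomial one by one. *)
Lemma annihilated_eigenvector q u : q != 0 -> u != 0 -> poly_act q u = 0 ->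
  exists q' t, poly_act q' u != 0 /\ E (poly_act q' u) = t *: poly_act q' u.
Proof.
move=> + u0; elim: {q}(size q) {-2}q (leqnn (size q)) => [|k IH] q.
  by rewrite leqn0 size_poly_eq0 => /eqP ->; rewrite eqxx.
move=> sq q0 qu; case: (eqVneq (size q) 1) => [s1 | s1].
  move: qu; rewrite /poly_act s1 big_ord1 /= => /eqP; rewrite scaler_eq0 (negbTE u0).
  by move: q0; rewrite -lead_coef_eq0 lead_coefE s1 => /negbTE ->.
have [r rr] := closed_rootP q s1; have [q' Eq] := factor_theorem q r rr.
have q'0 : q' != 0 by apply: contraNneq q0 => e; rewrite Eq e mul0r.
have sq' : (size q' <= k)%N.
  by move: sq; rewrite Eq size_mul ?polyXsubC_eq0 // size_XsubC addn2.
move: qu; rewrite Eq poly_act_factor => /eqP; rewrite subr_eq0 => /eqP Eu.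
case: (eqVneq (poly_act q' u) 0) => [P0 | P0]; first exact: (IH q').
by exists q', r.
Qed.

Lemma invariant_eigenvector (W : V -> Prop) (sp : seq V) u :
  W 0 -> (forall x y, W x -> W y -> W (x + y)) -> (forall (a : F) x, W x -> W (a *: x)) ->
  (forall x, W x -> W (E x)) ->
  (forall v, W v -> exists c : 'I_(size sp) -> F, v = \sum_(i < size sp) c i *: sp`_i) ->
  W u -> u != 0 -> exists w t, [/\ W w, w != 0 & E w = t *: w].
Proof.
move=> W0 WD WZ WE Wsp Wu u0.
have Wit i x : W x -> W (iter i E x) by elim: i => //= i IH /IH /WE.
have Wact q : W (poly_act q u) by apply: (big_ind W) => // i _; apply/WZ/Wit.
(* the iterates u, E u, ..., E^(size sp) u are dependent *)
have [a [[i0 ai0] Sa]] := spanned_dependent Wsp (f := fun i => iter i E u) (fun i => Wit _ _ Wu).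
pose q := \poly_(i < (size sp).+1) a (inord i).
have q0 : q != 0.
  apply: contraNneq ai0 => /(congr1 (fun q : {poly F} => q`_i0)).
  by rewrite coef_poly ltn_ord coef0 inord_val => ->.
have qu : poly_act q u = 0.
  rewrite (poly_actE _ (B := (size sp).+1)) ?size_poly // -[RHS]Sa.
  by apply: eq_bigr => i _; rewrite coef_poly ltn_ord inord_val.
have [q' [t [nz Eq']]] := annihilated_eigenvector q0 u0 qu.
by exists (poly_act q' u), t.
Qed.

End EigenvectorExistence.

Lemma int_shift_decomposition (m : int) (a b : nat) :
  (0 < a)%N -> (0 < b)%N -> a = 1%N \/ b = 1%N ->
  exists r s : nat, m + (r * a)%N%:Z - (s * b)%N%:Z = 0.
Proof.
move=> a0 b0 [-> | ->].
- by exists (absz ((absz m * b)%N%:Z - m)), (absz m); nia.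
- by exists (absz m), (absz ((absz m * a)%N%:Z + m)); nia.
Qed.

Section Representation.
Variables (C : numClosedFieldType) (V : lmodType C) (n : nat).
Variables (h z : {linear V -> V}) (p : nat -> {linear V -> V}) (zd : C).
Hypothesis rep : is_rep n h z p.
Hypothesis zact : forall v, z v = zd *: v.
Hypothesis zd0 : zd != 0.

Local Notation N := n.*2.+1.

Definition bracket (k : nat) : C :=
  (-1) ^+ (k + n + 1) * ((k`! * (N - k)`!)%N)%:R * zd.

(* Nonvanishing is where zd != 0 is used. *)
Lemma bracket_neq0 k : bracket k != 0.
Proof.
by rewrite /bracket !mulf_neq0 ?signr_eq0 // pnatr_eq0 muln_eq0 negb_or -!lt0n !fact_gt0.
Qed.

Lemma p_bracket k : (k <= N)%N -> forall v,
  p k (p (N - k) v) - p (N - k) (p k v) = bracket k *: v.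
Proof.
move=> kN v; case: rep => Hpp _ _ _.
by rewrite Hpp ?leq_subr // subnKC // eqxx zact scalerA.
Qed.

Lemma p_commute j k : (j <= N)%N -> (k <= N)%N -> (j + k != N)%N ->
  forall v, p j (p k v) = p k (p j v).
Proof.
move=> jN kN jk v; case: rep => Hpp _ _ _.
by apply/eqP; rewrite -subr_eq0 Hpp // (negbTE jk) scale0r.
Qed.

Definition pweight (k : nat) : C := N%:R - (k.*2)%:R.

Lemma h_p k : (k <= N)%N -> forall v, h (p k v) - p k (h v) = pweight k *: p k v.
Proof. by move=> kN v; case: rep => _ Hhp _ _; rewrite Hhp. Qed.

Lemma pweight_dual k : (k <= N)%N -> pweight (N - k) = - pweight k.
Proof.
move=> kN; rewrite /pweight -!muln2 mulnBl natrB; last by rewrite leq_mul2r; lia.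
by rewrite !natrM; ring.
Qed.

Lemma pweight_nat k : (k <= n)%N -> pweight k = (N - k.*2)%N%:R.
Proof. by move=> kn; rewrite /pweight natrB //; lia. Qed.

Lemma pweight_n : pweight n = 1.
Proof. by rewrite pweight_nat // (_ : (N - n.*2)%N = 1%N) //; lia. Qed.

Lemma weight_p k mu v : (k <= N)%N ->
  weight_space h mu v -> weight_space h (mu + pweight k) (p k v).
Proof.
move=> kN Hv; move/eqP: (h_p kN v); rewrite /weight_space Hv linearZ subr_eq => /eqP ->.
by rewrite -scalerDl addrC.
Qed.

Lemma weight_iter k mu v m : (k <= N)%N ->
  weight_space h mu v -> weight_space h (mu + m%:R * pweight k) (iter m (p k) v).
Proof. by move=> kN; apply: iter_eigen; apply: h_p. Qed.

Lemma weight_space_closed mu : [/\ weight_space h mu 0,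
  (forall x y, weight_space h mu x -> weight_space h mu y -> weight_space h mu (x + y))
  & (forall (a : C) x, weight_space h mu x -> weight_space h mu (a *: x))].
Proof.
split; first by rewrite /weight_space linear0 scaler0.
- by move=> x y; rewrite /weight_space linearD => -> ->; rewrite scalerDr.
- by move=> a x; rewrite /weight_space !linearZ => /= ->; rewrite scalerA mulrC -scalerA.
Qed.

Lemma nilpotent_locus_submodule i : (i <= N)%N ->
  submodule n h z p (fun v => exists m, iter m (p i) v = 0).
Proof.
move=> iN; split.
- by exists 0%N.
- move=> u v [m1 H1] [m2 H2]; exists (m1 + m2)%N.
  by rewrite iter_linD {1}addnC !iterD H1 H2 !iter_lin0 addr0.
- by move=> a v [m Hm]; exists m; rewrite iter_linZ Hm scaler0.
split.
- move=> v [m Hm]; exists m.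
  by have := iter_shift m v (h_p iN); rewrite Hm linear0 scaler0 addr0 => <-.
- by move=> v [m Hm]; exists m; rewrite zact iter_linZ Hm scaler0.
- move=> k kN v [m Hm]; case: (eqVneq (i + k)%N N) => ik.
  + (* p_(N-i) raises the nilpotency degree of p_i by at most one *)
    exists m.+1; rewrite (_ : k = N - i)%N; last by rewrite -ik addKn.
    by rewrite (iter_heisenberg _ _ (p_bracket iN)) iterS Hm !linear0 addr0.
  + exists m; rewrite -(iter_comm _ _ (p_commute kN iN _)) ?Hm ?linear0 //.
    by rewrite addnC.
Qed.

(* If p_i is locally nilpotent then p_(N-i) is injective: by the Heisenberg
   relation, p_(N-i) v = 0 and p_i^(m+1) v = 0 force p_i^m v = 0. *)
Lemma nilpotent_dual_kernel_free i : (i <= N)%N ->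
  locally_nilpotent (p i) -> kernel_free (p (N - i)).
Proof.
move=> iN LN u Bu; have [m Hm] := LN u.
elim: m Hm => // m IH Hm; apply: IH.
have := iter_heisenberg m u (p_bracket iN); rewrite Bu iter_lin0 Hm linear0 add0r.
move/esym/eqP; rewrite scaler_eq0 mulf_eq0 pnatr_eq0 (negbTE (bracket_neq0 i)) /=.
by move/eqP.
Qed.

Variable lam : C.

(* V_lam cannot be finite dimensional and nonzero while a raising operator p_k
   and a lowering operator p_(N-k') with k != k' are both injective: with
   E = p_k p_(N-k) (which stabilizes V_lam) and T = p_k^D' p_(N-k')^D of weight 0,
   the vectors T^i w of an E-eigenvector w in V_lam are nonzero eigenvectors
   of E for the distinct eigenvalues t - i D' [p_k, p_(N-k)]. *)
Lemma no_two_sided_pair k k' u : fin_dim (weight_space h lam) ->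
  u != 0 -> weight_space h lam u -> (k <= n)%N -> (k' <= n)%N -> k != k' ->
  kernel_free (p k) -> kernel_free (p (N - k')) -> False.
Proof.
move=> [sp Hsp] u0 wu kn kn' kk' Ik Ik'.
have kN : (k <= N)%N by lia.
have kN' : (N - k' <= N)%N by apply: leq_subr.
pose D := (N - k.*2)%N; pose D' := (N - k'.*2)%N.
pose E : {linear V -> V} := p k \o p (N - k).
pose T v := iter D' (p k) (iter D (p (N - k')) v).
have WE v : weight_space h lam v -> weight_space h lam (E v).
  by move=> wv; have := weight_p kN (weight_p (leq_subr k N) wv); rewrite (pweight_dual kN) subrK.
have WT v : weight_space h lam v -> weight_space h lam (T v).
  move=> wv; have := weight_iter D' kN (weight_iter D kN' wv).
  rewrite (pweight_dual (k := k')) ?(pweight_nat kn) ?(pweight_nat kn') //; last by lia.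
  by rewrite mulrN [D'%:R * _]mulrC subrK.
have EY v : E (p (N - k') v) = p (N - k') (E v).
  by rewrite /= !(@p_commute _ (N - k')%N) //; lia.
have ET v t : E v = t *: v -> E (T v) = (t - D'%:R * bracket k) *: T v.
  have EA x : E (p k x) - p k (E x) = - bracket k *: p k x.
    exact: comp_commutator (p_bracket kN) x.
  move=> Ev; rewrite /T -mulrN; apply: (@iter_eigen _ _ E (p k) _ t D' _ EA).
  by rewrite (iter_comm _ _ EY) Ev iter_linZ.
have [W0 WD WZ] := weight_space_closed lam.
have [w [t [Ww w0 Ew]]] := invariant_eigenvector W0 WD WZ WE Hsp wu u0.
have c0 : D'%:R * bracket k != 0 by rewrite mulf_neq0 ?bracket_neq0 // pnatr_eq0; lia.
apply: (no_infinite_eigen_family (E := E) Hsp (g := fun i => iter i T w)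
  (ev := fun i : nat => t - i%:R * (D'%:R * bracket k))).
- by move=> i j /addrI /oppr_inj /(mulIf c0) /eqP; rewrite eqr_nat => /eqP.
- by elim=> //= i /WT.
- by elim=> //= i; apply: contra => /eqP /(iter_inj Ik) /(iter_inj Ik') ->.
- elim=> [|i IH]; first by rewrite mul0r subr0.
  by rewrite iterS (ET _ _ IH) -addrA -opprD mulrSr mulrDl mul1r.
Qed.

Lemma reach_weight i j (a b : nat) w mu (m : int) : (i <= N)%N -> (j <= N)%N ->
  kernel_free (p i) -> kernel_free (p j) -> pweight i = a%:R -> pweight j = - b%:R ->
  (0 < a)%N -> (0 < b)%N -> a = 1%N \/ b = 1%N ->
  w != 0 -> weight_space h mu w -> mu = lam + m%:~R ->
  exists u, u != 0 /\ weight_space h lam u.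
Proof.
move=> iN jN Ii Ij wi wj a0 b0 ab w0 wm Em.
have [r [s rs]] := int_shift_decomposition m a0 b0 ab.
exists (iter r (p i) (iter s (p j) w)); split.
  by apply: contra w0 => /eqP /(iter_inj Ii) /(iter_inj Ij) ->.
have := weight_iter r iN (weight_iter s jN wm); rewrite wi wj Em.
have := congr1 (fun x : int => x%:~R : C) rs; rewrite /= !intrD intrN.
rewrite -[((r * a)%N%:Z)%:~R]/((r * a)%:R : C) -[((s * b)%N%:Z)%:~R]/((s * b)%:R : C).
rewrite !natrM => rsC.
suff -> : lam + m%:~R + s%:R * - b%:R + r%:R * a%:R = lam by [].
by rewrite -[RHS]addr0 -(mulr0z 1) -rsC; ring.
Qed.

Section Simple.
Hypothesis simp : simple_module n h z p.

Lemma kernel_free_or_nilpotent i : (i <= N)%N ->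
  kernel_free (p i) \/ locally_nilpotent (p i).
Proof.
move=> iN; case: (classic (kernel_free (p i))) => [|ni]; first by left.
right; case: simp => _ /(_ _ (nilpotent_locus_submodule iN)) [H0|//].
by case: ni => v pv; apply: (H0 v); exists 1%N.
Qed.

Lemma dual_pair_kernel_free k : (k <= N)%N ->
  kernel_free (p k) \/ kernel_free (p (N - k)).
Proof.
move=> kN; case: (kernel_free_or_nilpotent kN) => [|LN]; first by left.
by right; apply: nilpotent_dual_kernel_free.
Qed.

Lemma some_kernel_free (f : nat -> nat) :
  (forall k, (k <= n)%N -> (f k <= N)%N) ->
  ~ (forall k, (k <= n)%N -> locally_nilpotent (p (f k))) ->
  exists k, (k <= n)%N /\ kernel_free (p (f k)).
Proof.
move=> fN H; have [k Hk] := not_all_ex_not _ _ H.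
have [kn nLN] := imply_to_and _ _ Hk.
by exists k; split => //; case: (kernel_free_or_nilpotent (fN _ kn)).
Qed.

Lemma generated_by_nonzero v : v != 0 -> generated_by n h z p v.
Proof.
move=> v0 P sP Pv w; case: simp => _ /(_ P sP) [H0|//].
by case/eqP: v0; apply: H0.
Qed.

Hypothesis wmod : weight_module h.

Lemma weight_vector_exists : exists w mu, w != 0 /\ weight_space h mu w.
Proof.
case: simp => [[v v0] _]; have [s [Hs Ev]] := wmod v.
case: (boolP (has (fun x : C * V => x.2 != 0) s)) => [/hasP[x xs nz] | /hasPn H].
  by exists x.2, x.1; split => //; apply: Hs.
case/eqP: v0; rewrite Ev big1_seq // => x /andP[_ xs].
by have := H x xs; rewrite negbK => /eqP.
Qed.

(* If the p_(f k), k < l, pairwise commute and are locally nilpotent, they have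
   a common nonzero weight vector in their kernels: kill them one at a time,
   each new iterate staying in the kernels of the previous ones. *)
Lemma common_kernel_vector (f : nat -> nat) :
  (forall k, (k <= n)%N -> (f k <= N)%N) ->
  (forall j k, (j <= n)%N -> (k <= n)%N -> (f j + f k != N)%N) ->
  (forall k, (k <= n)%N -> locally_nilpotent (p (f k))) ->
  exists w mu, [/\ w != 0, weight_space h mu w & forall k, (k <= n)%N -> p (f k) w = 0].
Proof.
move=> fN fc fLN.
suff /(_ n.+1 (leqnn _)) [w [mu [w0 wm Hk]]] : forall j, (j <= n.+1)%N ->
    exists w mu, [/\ w != 0, weight_space h mu w & forall k, (k < j)%N -> p (f k) w = 0].
  by exists w, mu.
elim=> [_|j IH jn].
  by have [w [mu [w0 wm]]] := weight_vector_exists; exists w, mu.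
have [w [mu [w0 wm Hk]]] := IH (ltnW jn).
have [M HM] := fLN j jn w; have [m [nz ker]] := last_nonzero_iterate w0 HM.
exists (iter m (p (f j)) w), (mu + m%:R * pweight (f j)); split => //.
  exact: weight_iter (fN _ jn) wm.
move=> k; rewrite ltnS leq_eqVlt => /orP[/eqP -> //|kj].
have kn : (k <= n)%N by lia.
by rewrite (iter_comm _ _ (p_commute (fN _ kn) (fN _ jn) (fc _ _ kn jn))) Hk ?iter_lin0.
Qed.

Lemma highest_of_nilpotent : (forall k, (k <= n)%N -> locally_nilpotent (p k)) ->
  highest_weight_module n h z p.
Proof.
move=> H; have [|j k jn kn|w [mu [w0 wm Hk]]] := common_kernel_vector (f := id) _ _ H.
- by move=> k kn /=; lia.
- by rewrite /=; lia.
by exists w, mu; split => //; apply: generated_by_nonzero.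
Qed.

Lemma lowest_of_nilpotent : (forall k, (k <= n)%N -> locally_nilpotent (p (N - k))) ->
  lowest_weight_module n h z p.
Proof.
move=> H; have [|j k jn kn|w [mu [w0 wm Hk]]] :=
  common_kernel_vector (f := fun k => N - k)%N _ _ H.
- by move=> k kn; apply: leq_subr.
- by lia.
exists w, mu; split => //; last by apply: generated_by_nonzero.
by move=> k /andP[nk kN]; rewrite -(subKn kN) Hk //; lia.
Qed.

Lemma highest_lowest_or_two_sided :
  [\/ highest_weight_module n h z p, lowest_weight_module n h z p |
    (exists j, (j <= n)%N /\ kernel_free (p j)) /\
    (exists i, (i <= n)%N /\ kernel_free (p (N - i)))].
Proof.
case: (classic (forall k, (k <= n)%N -> locally_nilpotent (p k))) => [H|H1].
  by apply: Or31; apply: highest_of_nilpotent.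
case: (classic (forall k, (k <= n)%N -> locally_nilpotent (p (N - k)))) => [H|H2].
  by apply: Or32; apply: lowest_of_nilpotent.
apply: Or33; split.
- by apply: (some_kernel_free (f := id)) => // k kn /=; lia.
- by apply: (some_kernel_free (f := fun k => N - k)%N) => // k _; apply: leq_subr.
Qed.

(* Under the support hypothesis, injectivity of a raising and of a lowering
   operator forces V_lam != 0: combine them with whichever of p_n (weight 1)
   and p_(n+1) (weight -1) is injective. *)
Lemma lam_weight_vector :
  (forall mu, in_supp h mu -> exists m : int, mu = lam + m%:~R) ->
  (exists j, (j <= n)%N /\ kernel_free (p j)) /\
  (exists i, (i <= n)%N /\ kernel_free (p (N - i))) ->
  exists u, u != 0 /\ weight_space h lam u.
Proof.
move=> hs [[j [jn Ij]] [i [iin Ii]]].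
have [w [mu [w0 wm]]] := weight_vector_exists.
have [m Em] := hs mu (ex_intro _ w (conj w0 wm)).
have nN : (n <= N)%N by lia.
case: (dual_pair_kernel_free nN) => In.
- apply: (reach_weight (a := 1) (b := N - i.*2) nN (leq_subr _ _) In Ii pweight_n _
    isT _ (or_introl erefl) w0 wm Em); last by lia.
  by rewrite pweight_dual ?pweight_nat //; lia.
- apply: (reach_weight (a := N - j.*2) (b := 1) _ (leq_subr _ _) Ij In (pweight_nat jn) _
    _ isT (or_intror erefl) w0 wm Em); [lia | | lia].
  by rewrite pweight_dual // pweight_n.
Qed.

(* Part (ii): for l > 1/2 a third index k distinct from the injective pair
   yields another injective operator, contradicting no_two_sided_pair. *)
Lemma positive_case : (0 < n)%N ->
  (forall mu, in_supp h mu -> exists m : int, mu = lam + m%:~R) ->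
  fin_dim (weight_space h lam) ->
  highest_weight_module n h z p \/ lowest_weight_module n h z p.
Proof.
move=> n0 hs hf.
case: highest_lowest_or_two_sided => [H|H|Hji]; [by left | by right |].
have [u [u0 wu]] := lam_weight_vector hs Hji.
case: Hji => [[j [jn Ij]] [i [iin Ii]]]; exfalso.
case: (eqVneq j i) => [eji|nji]; last exact: (no_two_sided_pair hf u0 wu jn iin nji Ij Ii).
pose k := if j == 0%N then n else 0%N.
have kn : (k <= n)%N by rewrite /k; case: ifP.
have kj : k != j.
  by rewrite /k; case: (eqVneq j 0%N) => [->|nj] /=; [rewrite -lt0n | rewrite eq_sym].
have kN : (k <= N)%N by lia.
case: (dual_pair_kernel_free kN) => Ik.
- by apply: (no_two_sided_pair hf u0 wu kn iin _ Ik Ii); rewrite -eji.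
- by apply: (no_two_sided_pair hf u0 wu jn kn _ Ij Ik); rewrite eq_sym.
Qed.

Section HalfCase.
Hypothesis n0 : n = 0%N.

Lemma N_half : N = 1%N. Proof. by rewrite n0. Qed.

Lemma p1N : (1 <= N)%N. Proof. by rewrite N_half. Qed.

Lemma pweight0 : pweight 0 = 1. Proof. by have := pweight_n; rewrite n0. Qed.

Lemma pweight1 : pweight 1 = -1.
Proof. by have := pweight_dual (leq0n N); rewrite subn0 N_half pweight0. Qed.

Lemma p01_commutator v : p 0 (p 1 v) - p 1 (p 0 v) = - zd *: v.
Proof.
have := p_bracket (leq0n N) v; rewrite subn0 N_half => ->; congr (_ *: _).
by rewrite /bracket n0 (_ : (0 + 0 + 1)%N = 1%N) // (_ : (0`! * _)%N = 1%N) // expr1 !mulN1r.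
Qed.

Lemma p10E v : p 1 (p 0 v) = p 0 (p 1 v) + zd *: v.
Proof. by rewrite -(subrK (p 1 (p 0 v)) (p 0 (p 1 v))) p01_commutator scaleNr addrC addNKr. Qed.

Variables (w : V) (t a : C).
Hypotheses (I0 : kernel_free (p 0)) (I1 : kernel_free (p 1)).
Hypotheses (w0 : w != 0) (ww : weight_space h lam w).
Hypotheses (Ew : p 0 (p 1 w) = t *: w) (ta : t = - (zd * (a + 1))).

(* The vectors x^(-j) of D(a, zd), j >= 0: normalized iterates of p_0 on w. *)
Fixpoint down_vec (j : nat) : V :=
  if j is j'.+1 then (- (zd * (a - j'%:R)))^-1 *: p 0 (down_vec j') else w.

Definition dbasis (i : int) : V :=
  match i with
  | Posz k => iter k (p 1) w
  | Negz j => down_vec j.+1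
  end.

Lemma p01_kernel_free v : p 0 (p 1 v) = 0 -> v = 0.
Proof. by move/I0/I1. Qed.

Lemma p10_kernel_free v : p 1 (p 0 v) = 0 -> v = 0.
Proof. by move/I1/I0. Qed.

Lemma up_props k : [/\ iter k (p 1) w != 0,
  p 0 (p 1 (iter k (p 1) w)) = (t - k%:R * zd) *: iter k (p 1) w,
  weight_space h (lam - k%:R) (iter k (p 1) w) & a + k.+1%:R != 0].
Proof.
have f0 : iter k (p 1) w != 0 by apply: contra w0 => /eqP /(iter_inj I1) ->.
have Ef : p 0 (p 1 (iter k (p 1) w)) = (t - k%:R * zd) *: iter k (p 1) w.
  by rewrite -mulrN; apply: (@iter_eigen _ _ _ (p 1) _ t k w (fun v => p01_commutator (p 1 v)) Ew).
split => //.
- by have := weight_iter k p1N ww; rewrite pweight1 mulrN1.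
- apply: contra f0 => /eqP e; apply/eqP/p01_kernel_free; rewrite Ef.
  suff -> : t - k%:R * zd = 0 by rewrite scale0r.
  rewrite ta.
  have -> : a = - k.+1%:R by rewrite -[a](addrK k.+1%:R) e sub0r.
  by rewrite -natr1; ring.
Qed.

(* The x^(-j), j >= 0: nonzero, p_0 p_1-eigenvectors of weight lam + j; moreover
   a != j, so that the normalization in down_vec is legitimate. *)
Lemma down_props j : [/\ down_vec j != 0,
  p 0 (p 1 (down_vec j)) = (t + j%:R * zd) *: down_vec j,
  weight_space h (lam + j%:R) (down_vec j) & a - j%:R != 0].
Proof.
elim: j => [|j [g0 Eg wg aj0]].
  have E1 := p10E w; rewrite Ew -scalerDl in E1.
  split => //; [by rewrite mul0r addr0 | by rewrite addr0 |].
  rewrite subr0; apply: contra w0 => /eqP a0; apply/eqP/p10_kernel_free.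
  by rewrite E1 ta a0 add0r mulr1 addNr scale0r.
have E1 : p 1 (p 0 (down_vec j)) = (- (zd * (a - j%:R))) *: down_vec j.
  by rewrite p10E Eg -scalerDl ta; congr (_ *: _); ring.
have c0 : - (zd * (a - j%:R)) != 0.
  by apply: contra g0 => /eqP c0; apply/eqP/p10_kernel_free; rewrite E1 c0 scale0r.
have g1 : down_vec j.+1 != 0.
  rewrite /= scaler_eq0 invr_eq0 negb_or c0 /=.
  by apply: contra g0 => /eqP /I0 ->.
have Eg1 : p 0 (p 1 (down_vec j.+1)) = (t + j.+1%:R * zd) *: down_vec j.+1.
  rewrite [down_vec j.+1]/= [p 1 _]linearZ /= E1 !linearZ /= !scalerA.
  by congr (_ *: _); rewrite ta -natr1; ring.
split => //.
- have := weight_p (leq0n N) wg; rewrite pweight0 -natr1 /weight_space => Hw.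
  by rewrite /= linearZ /= Hw !scalerA mulrC addrA.
- apply: contra g1; rewrite subr_eq0 => /eqP ae; apply/eqP/p10_kernel_free.
  rewrite p10E Eg1 -scalerDl.
  by rewrite (_ : t + j.+1%:R * zd + zd = 0) ?scale0r // ta ae -natr1; ring.
Qed.

Lemma dbasis_Negz1 j : dbasis (Negz j + 1) = down_vec j.
Proof.
case: j => [|j]; first by rewrite (_ : Negz 0 + 1 = 0).
by rewrite (_ : Negz j.+1 + 1 = Negz j) //; rewrite !NegzE; lia.
Qed.

Lemma dbasis_nonzero i : dbasis i != 0.
Proof. by case: i => [k|j] /=; [case: (up_props k) | case: (down_props j.+1)]. Qed.

Lemma dbasis_weight i : h (dbasis i) = (lam - i%:~R) *: dbasis i.
Proof.
case: i => [k|j] /=; first by case: (up_props k).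
case: (down_props j.+1) => _ _ Hw _; rewrite Hw NegzE intrN opprK.
by rewrite -[((j.+1)%:Z)%:~R]/(j.+1%:R : C).
Qed.

Lemma dbasis_p1 i : p 1 (dbasis i) = dbasis (i + 1).
Proof.
case: i => [k|j]; first by rewrite (_ : Posz k + 1 = Posz k.+1) //; lia.
rewrite dbasis_Negz1 /= linearZ /= p10E.
case: (down_props j) => _ Eg _ aj; rewrite Eg -scalerDl scalerA.
rewrite (_ : t + j%:R * zd + zd = - (zd * (a - j%:R))); last by rewrite ta; ring.
by rewrite mulVf ?scale1r // oppr_eq0 mulf_neq0.
Qed.

Lemma dbasis_p0 i : p 0 (dbasis i) = (- (zd * (a + i%:~R))) *: dbasis (i - 1).
Proof.
case: i => [[|k]|j].
- rewrite (_ : Posz 0 - 1 = Negz 0) //= linearZ /= scalerA.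
  case: (down_props 0) => _ _ _; rewrite !subr0 addr0 => a0.
  by rewrite mulVf ?scale1r // oppr_eq0 mulf_neq0.
- rewrite (_ : Posz k.+1 - 1 = Posz k); last by lia.
  case: (up_props k) => _ Ef _ _; rewrite /= Ef; congr (_ *: _).
  by rewrite -[((k.+1)%:Z)%:~R]/(k.+1%:R : C) ta -natr1; ring.
- rewrite (_ : Negz j - 1 = Negz j.+1); last by rewrite !NegzE; lia.
  rewrite /= [p 0 (_ *: _)]linearZ /= scalerA NegzE intrN.
  rewrite -[((j.+1)%:Z)%:~R]/(j.+1%:R : C) mulfV ?scale1r //.
  by case: (down_props j.+1) => _ _ _ aj; rewrite oppr_eq0 mulf_neq0.
Qed.

Lemma dbasis_free (s : seq int) (c : int -> C) : uniq s ->
  \sum_(i <- s) c i *: dbasis i = 0 -> forall i, i \in s -> c i = 0.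
Proof.
move=> us S0 i iin.
have /eqP : c i *: dbasis i = 0.
  apply: (eigen_sum_eq0 (E := h) (ev := fun i : int => lam - i%:~R) us _ _ S0 iin).
  - by move=> x y _ _ /= /addrI /oppr_inj /intr_inj.
  - by move=> j _; rewrite linearZ /= dbasis_weight !scalerA mulrC.
by rewrite scaler_eq0 (negbTE (dbasis_nonzero i)) orbF => /eqP.
Qed.

(* The span of the x^i is a nonzero submodule, hence all of V. *)
Lemma dbasis_spans v : exists (s : seq int) (c : int -> C), v = \sum_(i <- s) c i *: dbasis i.
Proof.
pose Sp v := exists l : seq (C * int), v = \sum_(x <- l) x.1 *: dbasis x.2.
suff [l ->] : Sp v.
  by have [s [c [_ E]]] := combination_uniq dbasis l; exists s, c.
have Sp_stable (F : V -> V) (f : int -> C) (g : int -> int) :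
    {morph F : x y / x + y} -> (forall (b : C) x, F (b *: x) = b *: F x) ->
    (forall i, F (dbasis i) = f i *: dbasis (g i)) -> forall x, Sp x -> Sp (F x).
  move=> FD FZ Fe x [l ->]; exists [seq (y.1 * f y.2, g y.2) | y <- l].
  have F0 : F 0 = 0 by have := FZ 0 0; rewrite !scale0r.
  rewrite big_map (big_morph F FD F0).
  by apply: eq_bigr => y _; rewrite FZ Fe scalerA.
have sub : submodule n h z p Sp.
  split.
  - by exists [::]; rewrite big_nil.
  - by move=> x y [l1 ->] [l2 ->]; exists (l1 ++ l2); rewrite big_cat.
  - move=> b; apply: (Sp_stable _ (fun _ => b) id) => [x y|c x|i].
    + exact: scalerDr.
    + by rewrite !scalerA mulrC.
    + by [].
  split.
  - by apply: (Sp_stable _ (fun i => lam - i%:~R) id) => [x y|c x|i];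
      rewrite ?linearD ?linearZ ?dbasis_weight.
  - by apply: (Sp_stable _ (fun _ => zd) id) => [x y|c x|i]; rewrite ?linearD ?linearZ ?zact.
  - move=> k; rewrite N_half => kN; have [->|->] : k = 0%N \/ k = 1%N by lia.
    + by apply: (Sp_stable _ (fun i => - (zd * (a + i%:~R))) (fun i => i - 1))
        => [x y|c x|i]; rewrite ?linearD ?linearZ ?dbasis_p0.
    + by apply: (Sp_stable _ (fun _ => 1) (fun i => i + 1)) => [x y|c x|i];
        rewrite ?linearD ?linearZ ?dbasis_p1 ?scale1r.
case: simp => _ /(_ Sp sub) [H0|//].
have : Sp w by exists [:: (1, 0%Z)]; rewrite big_seq1 scale1r.
by move/H0 => /eqP; rewrite (negbTE w0).
Qed.

(* a is not an integer: otherwise p_0 or p_1 would kill some x^i. *)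
Lemma a_not_integer (m : int) : a != m%:~R.
Proof.
case: m => [k|k].
- by case: (down_props k) => _ _ _; rewrite subr_eq0.
- case: (up_props k) => _ _ _; apply: contraNneq => ->.
  by rewrite NegzE intrN -[((k.+1)%:Z)%:~R]/(k.+1%:R : C) addNr.
Qed.

Lemma dbasis_iso_D : iso_D h z p a zd lam.
Proof.
exists dbasis; split; first by split; [exact: dbasis_free | exact: dbasis_spans].
by move=> i; split; rewrite ?dbasis_p1 ?dbasis_p0 ?zact ?dbasis_weight.
Qed.

End HalfCase.

Lemma half_case : n = 0%N ->
  (forall mu, in_supp h mu -> exists m : int, mu = lam + m%:~R) ->
  fin_dim (weight_space h lam) ->
  highest_weight_module n h z p \/ lowest_weight_module n h z p \/
  exists a mu : C, (forall m : int, a != m%:~R) /\ iso_D h z p a zd mu.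
Proof.
move=> n0 hs [sp Hsp].
case: highest_lowest_or_two_sided => [H|H|Hji]; [by left | by right; left | right; right].
have [u [u0 wu]] := lam_weight_vector hs Hji.
case: Hji => [[j [jn Ij]] [i [iin Ii]]].
have I0 : kernel_free (p 0) by move: jn Ij; rewrite n0 leqn0 => /eqP ->.
have I1 : kernel_free (p 1) by move: iin Ii; rewrite n0 leqn0 => /eqP ->.
have WE x : weight_space h lam x -> weight_space h lam ((p 0 \o p 1) x).
  move=> wx; have := weight_p (leq0n N) (weight_p (p1N n0) wx).
  by rewrite (pweight1 n0) (pweight0 n0) subrK.
have [W0 WD WZ] := weight_space_closed lam.
have [w [t [ww w0 Ew]]] := invariant_eigenvector W0 WD WZ WE Hsp wu u0.
pose a := - (t / zd) - 1.
have ta : t = - (zd * (a + 1)) by rewrite /a subrK mulrN opprK mulrC divfK.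
exists a, lam; split.
- exact: (a_not_integer n0 I0 I1 w0 ww Ew ta).
- exact: (dbasis_iso_D n0 I0 I1 w0 ww Ew ta).
Qed.

End Simple.

End Representation.

Unset Implicit Arguments.

(* l = n + 1/2;  zd = the nonzero scalar by which z acts. *)
Theorem mainTheorem15 (C : numClosedFieldType) (V : lmodType C) (n : nat)
    (h z : {linear V -> V}) (p : nat -> {linear V -> V}) (zd lam : C) :
  is_rep n h z p ->
  simple_module n h z p ->
  weight_module h ->
  (forall v, z v = zd *: v) -> zd != 0 ->
  (forall mu, in_supp h mu -> exists m : int, mu = lam + m%:~R) ->
  fin_dim (weight_space h lam) ->
  (n = 0%N ->
     highest_weight_module n h z p \/ lowest_weight_module n h z p \/
     exists a mu : C, (forall m : int, a != m%:~R) /\ iso_D h z p a zd mu) /\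
  ((0 < n)%N ->
     highest_weight_module n h z p \/ lowest_weight_module n h z p).
Proof.
move=> rep simp wmod zact zd0 supp fdim; split => [n0 | n_pos].
- exact: (half_case rep zact zd0 simp wmod n0 supp fdim).
- exact: (positive_case rep zact zd0 simp wmod n_pos supp fdim).
Qed.
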